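(* Let $T$ be any shortest-path tree of $G$ rooted at $s$, let $R$ be the forest obtained from $T$ by deleting the edges in $E(T)\cap E(D)$, and let $\widetilde{E}$ be the set of edges $\{x,y\}\in E\setminus(E(T)\cup E(D))$ whose endpoints lie in different connected components of $R$. For an ordered pair $(x,y)$ of vertices define $f(x,y)=d_s(x)+w(x,y)+d_t(y)$ if $\{x,y\}\in\widetilde{E}$ and $f(x,y)=\infty$ otherwise. If $(x,y)$ minimizes $f$ over all ordered pairs and $f(x,y)\neq\infty$, then there exists a simple $st$-path of length $f(x,y)$ containing an edge of $\widetilde{E}$, and such a path is an optimal outward path.
   Context: $G=(V,E,w)$ is a simple, connected, undirected graph with positive edge lengths, $s,t\in V$, $d(\cdot,\cdot)$ the shortest path distance, $d_s(v)=d(s,v)$, $d_t(v)=d(v,t)$. A path is always simple; an $st$-path is a simple path from $s$ to $t$, and its length is the sum of its edge lengths. $D$ is the subgraph formed by the union of all shortest $st$-paths of $G$. An optimal outward path is an $st$-path of minimum length among all $st$-paths containing at least one edge of $E\setminus E(D)$. Note $f(x,y)$ and $f(y,x)$ differ in general. *)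

From HB Require Import structures.
From mathcomp Require Import all_boot all_order all_algebra.
From mathcomp Require Import boolp classical_sets reals constructive_ereal.

Set Implicit Arguments.
Unset Strict Implicit.
Unset Printing Implicit Defensive.

Import Order.TTheory GRing.Theory Num.Theory.
Local Open Scope ring_scope.
Local Open Scope classical_set_scope.

Section GraphDefs.
Context {V : finType} {R : realType}.

Fixpoint walk_in (r : V -> V -> Prop) (x : V) (p : seq V) : Prop :=
  match p with
  | [::] => True
  | y :: q => r x y /\ walk_in r y q
  end.

Definition spath (r : V -> V -> Prop) (u : V) (p : seq V) (v : V) : Prop :=
  [/\ walk_in r u p, last u p = v & uniq (u :: p)].

Definition plen (w : V -> V -> R) (u : V) (p : seq V) : R :=
  \sum_(k <- zip (u :: p) p) w k.1 k.2.

Definition on_path (u : V) (p : seq V) (x y : V) : Prop :=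
  (x, y) \in zip (u :: p) p \/ (y, x) \in zip (u :: p) p.

Definition dist (e : rel V) (w : V -> V -> R) (u v : V) : R :=
  inf [set plen w u p | p in [set p | spath (fun a b => e a b) u p v]].

Definition sp_tree (e : rel V) (w : V -> V -> R) (s : V)
    (ET : V -> V -> Prop) : Prop :=
  [/\ (forall x y, ET x y -> e x y),
      (forall x y, ET x y -> ET y x),
      (forall v, exists p, walk_in ET s p /\ last s p = v),
      (* acyclic: no cycle (of length >= 3) in ET *)
      (~ exists x p, [/\ uniq (x :: p), (2 <= size p)%N, walk_in ET x p
                        & ET (last x p) x])
    &
      (forall v, exists p, spath ET s p v /\ plen w s p = dist e w s v)].

(* {x,y} is an edge of D, the union of all shortest st-paths *)
Definition inD (e : rel V) (w : V -> V -> R) (s t x y : V) : Prop :=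
  exists p, [/\ spath (fun a b => e a b) s p t,
               plen w s p = dist e w s t & on_path s p x y].

Definition forestR (e : rel V) (w : V -> V -> R) (s t : V)
    (ET : V -> V -> Prop) (x y : V) : Prop :=
  ET x y /\ ~ inD e w s t x y.

Definition same_comp (e : rel V) (w : V -> V -> R) (s t : V)
    (ET : V -> V -> Prop) (x y : V) : Prop :=
  exists p, walk_in (forestR e w s t ET) x p /\ last x p = y.

Definition Etilde (e : rel V) (w : V -> V -> R) (s t : V)
    (ET : V -> V -> Prop) (x y : V) : Prop :=
  [/\ e x y, ~ ET x y, ~ inD e w s t x y & ~ same_comp e w s t ET x y].

Definition fval (e : rel V) (w : V -> V -> R) (s t : V)
    (ET : V -> V -> Prop) (x y : V) : \bar R :=
  if pselect (Etilde e w s t ET x y)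
  then (dist e w s x + w x y + dist e w y t)%:E
  else +oo%E.

Definition outward (e : rel V) (w : V -> V -> R) (s t : V) (p : seq V) : Prop :=
  spath (fun a b => e a b) s p t /\
  exists x y, on_path s p x y /\ ~ inD e w s t x y.

Definition optimal_outward (e : rel V) (w : V -> V -> R) (s t : V)
    (p : seq V) : Prop :=
  outward e w s t p /\
  forall q, outward e w s t q -> plen w s p <= plen w s q.

End GraphDefs.

(* An outward st-path P contains an edge of E~.  Otherwise each edge of P
   outside D joins two vertices of one component of R; a component of R
   contains at most one vertex of D, since two of them, joined in R and to s by
   tree paths lying in D, would close a cycle of T; so P could never leave D.
   An edge xy of E~ on P gives len P >= d(s,x) + w(x,y) + d(y,t) = f(x,y).
   Conversely let (u,v) minimize f, with d(v,t) least among the minimizers.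
   The tree path to u, the edge uv and a shortest vt-path Q form a walk of
   length f(u,v), and it is simple: no edge of Q is in E~ (it would be a
   minimizer closer to t), so Q stays in the component of v until it first
   meets D; a vertex shared with the tree path then either puts u in the
   component of v or yields f(v,u) < f(u,v). *)

From HB Require Import structures.
From mathcomp Require Import all_boot all_order all_algebra.
From mathcomp Require Import boolp classical_sets reals constructive_ereal.
From mathcomp Require Import lra.

Set Implicit Arguments.
Unset Strict Implicit.
Unset Printing Implicit Defensive.
Import Order.TTheory GRing.Theory Num.Theory.
Local Open Scope ring_scope.

Section Walks.
Variable V : finType.
Implicit Types (r : V -> V -> Prop) (a b x y : V) (p q : seq V).

Lemma walk_in_cat r x p q :
  walk_in r x (p ++ q) <-> walk_in r x p /\ walk_in r (last x p) q.
Proof. by elim: p x => [|y p IHp] x /=; [tauto|rewrite IHp; tauto]. Qed.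

Lemma walk_in_zip r x p :
  walk_in r x p <-> forall a b, (a, b) \in zip (x :: p) p -> r a b.
Proof.
elim: p x => [|y p IHp] x /=; first by split=> // _ a b; rewrite in_nil.
rewrite IHp; split=> [[rxy rp] a b|rp].
  by rewrite in_cons => /orP[/eqP[-> ->]|/rp].
by split=> [|a b ab]; apply: rp; rewrite in_cons ?eqxx ?ab ?orbT.
Qed.

Lemma sub_walk_in r r' x p :
  (forall a b, r a b -> r' a b) -> walk_in r x p -> walk_in r' x p.
Proof. by move=> rr'; elim: p x => //= y p IHp x [/rr' ? /IHp]. Qed.

Lemma walk_in_and r r' x p :
  walk_in r x p -> walk_in r' x p -> walk_in (fun a b => r a b /\ r' a b) x p.
Proof. by elim: p x => //= y p IHp x [? /IHp rp] [? /rp]. Qed.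

Lemma last_rev_belast x p : last (last x p) (rev (belast x p)) = x.
Proof. by case: p => //= y p; rewrite rev_cons last_rcons. Qed.

Lemma walk_in_rev r x p : (forall a b, r a b -> r b a) ->
  walk_in r x p -> walk_in r (last x p) (rev (belast x p)).
Proof.
move=> r_sym; elim: p x => [|y p IHp] x //= [rxy /IHp rp].
rewrite rev_cons -cats1; apply/walk_in_cat; rewrite last_rev_belast.
by split=> //=; split=> //; apply: r_sym.
Qed.

Lemma mem_zip_edge x p a b : (a, b) \in zip (x :: p) p -> a \in x :: p /\ b \in p.
Proof.
elim: p x => [|y p IHp] x //=; rewrite in_cons => /orP[/eqP[-> ->]|/IHp[]].
  by rewrite !mem_head.
by move=> ha hb; rewrite in_cons ha orbT in_cons hb orbT.
Qed.

Lemma mem_zip_split x p a b : (a, b) \in zip (x :: p) p ->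
  exists p1 p2, p = p1 ++ b :: p2 /\ last x p1 = a.
Proof.
elim: p x => [|y p IHp] x //=; rewrite in_cons => /orP[/eqP[-> ->]|/IHp].
  by exists [::], p.
by move=> [p1 [p2 [-> <-]]]; exists (y :: p1), p2.
Qed.

Lemma mem_zip_mid x p y q :
  (last x p, y) \in zip (x :: p ++ y :: q) (p ++ y :: q).
Proof. by elim: p x => [|z p IHp] x /=; rewrite in_cons ?eqxx ?IHp ?orbT. Qed.

Lemma mem_zip_catl x p q a b : (a, b) \in zip (x :: p) p ->
  (a, b) \in zip (x :: p ++ q) (p ++ q).
Proof.
elim: p x => [|z p IHp] x //=.
by rewrite !in_cons => /orP[->|/IHp->]; rewrite ?orbT.
Qed.

Lemma spath_cat r x p q y : spath r x (p ++ q) y ->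
  spath r x p (last x p) /\ spath r (last x p) q y.
Proof.
move=> [/walk_in_cat[rp rq] <-]; rewrite -cat_cons cat_uniq => /and3P[up pq uq].
split; split; rewrite ?last_cat //= uq andbT.
by apply: contra pq => xq; apply/hasP; exists (last x p); rewrite ?mem_last.
Qed.

Lemma spath_cons r x y p z : spath r x (y :: p) z -> r x y /\ spath r y p z.
Proof. by move=> [[rxy rp] <- /andP[_ up]]. Qed.

Lemma spath_rev r x p y : (forall a b, r a b -> r b a) ->
  spath r x p y -> spath r y (rev (belast x p)) x.
Proof.
move=> r_sym [rp <- up]; split; first exact: walk_in_rev.
  exact: last_rev_belast.
by rewrite -rev_rcons -lastI rev_uniq.
Qed.

End Walks.

Section Lengths.
Variables (V : finType) (R : realType) (w : V -> V -> R).
Implicit Types (r : V -> V -> Prop) (a b x y : V) (p q : seq V).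

Lemma plen_nil x : plen w x [::] = 0.
Proof. by rewrite /plen big_nil. Qed.

Lemma plen_cons x y p : plen w x (y :: p) = w x y + plen w y p.
Proof. by rewrite /plen /= big_cons. Qed.

Lemma plen_cat x p q : plen w x (p ++ q) = plen w x p + plen w (last x p) q.
Proof.
by elim: p x => [|y p IHp] x /=; rewrite ?plen_nil ?add0r // !plen_cons IHp addrA.
Qed.

Lemma plen_rev r x p : (forall a b, r a b -> w a b = w b a) ->
  walk_in r x p -> plen w (last x p) (rev (belast x p)) = plen w x p.
Proof.
move=> w_sym; elim: p x => [|y p IHp] x //= [rxy /IHp rp].
rewrite rev_cons -cats1 plen_cat rp last_rev_belast !plen_cons plen_nil addr0.
by rewrite (w_sym _ _ rxy) addrC.
Qed.

Variable r : V -> V -> Prop.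
Hypothesis r_pos : forall a b, r a b -> 0 < w a b.

Lemma plen_ge0 x p : walk_in r x p -> 0 <= plen w x p.
Proof.
elim: p x => [|y p IHp] x /=; first by rewrite plen_nil.
by move=> [/r_pos ? /IHp ?]; rewrite plen_cons addr_ge0 // ltW.
Qed.

Lemma plen_gt0 x p : walk_in r x p -> p != [::] -> 0 < plen w x p.
Proof.
by case: p => [|y p] //= [/r_pos ? /plen_ge0 ?] _; rewrite plen_cons ltr_pwDl.
Qed.

Lemma walk_shorten x p : walk_in r x p ->
  exists q, [/\ walk_in r x q, last x q = last x p, uniq (x :: q),
    {subset q <= p} &
    plen w x q <= plen w x p /\ (~~ uniq (x :: p) -> plen w x q < plen w x p)].
Proof.
elim: {p}(size p) {-2}p (leqnn (size p)) x => [|n IHn] p.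
  by rewrite leqn0 => /nilP-> x _; exists [::].
move=> size_p x rp; have [up|not_up] := boolP (uniq (x :: p)).
  by exists p; split=> //; split=> //; rewrite up.
have [xp|xNp] := boolP (x \in p).
  case/path.splitP: xp size_p rp not_up => p1 p2 size_p /walk_in_cat[rp1 rp2] _.
  rewrite last_rcons in rp2.
  rewrite size_cat size_rcons addSn ltnS in size_p.
  have [|q [rq lq uq sub_q [le_q _]]] := IHn p2 _ x rp2.
    exact: leq_trans (leq_addl _ _) size_p.
  have lt0 : 0 < plen w x (rcons p1 x) by apply: (plen_gt0 rp1); case: (p1).
  exists q; split=> //; first by rewrite last_cat last_rcons.
    by move=> z /sub_q z_p2; rewrite mem_cat z_p2 orbT.
  by rewrite plen_cat last_rcons; split=> [|_]; lra.
case: p size_p rp not_up xNp => [|y p] // size_p [rxy rp] not_up xNp.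
have not_up' : ~~ uniq (y :: p) by rewrite cons_uniq xNp in not_up.
have [q [rq lq uq sub_q [le_q lt_q]]] := IHn p size_p y rp.
have sub_yq : {subset y :: q <= y :: p}.
  by move=> z; rewrite !in_cons => /orP[->|/sub_q->]; rewrite ?orbT.
exists (y :: q); split=> //.
- by rewrite cons_uniq uq andbT; apply: contra xNp => /sub_yq.
- by rewrite !plen_cons; have := lt_q not_up'; split=> [|_]; lra.
Qed.

End Lengths.

Section Distances.
Variables (V : finType) (R : realType) (e : rel V) (w : V -> V -> R).
Hypotheses (e_sym : symmetric e) (w_sym : forall a b, e a b -> w a b = w b a)
  (w_pos : forall a b, e a b -> 0 < w a b)
  (G_conn : forall u v, exists p, spath (fun a b => e a b) u p v).

Local Notation E := (fun a b : V => e a b).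
Local Notation d := (dist e w).
Implicit Types (a b c x y z : V) (p q : seq V).

Lemma dist_le_plen x p y : spath E x p y -> d x y <= plen w x p.
Proof.
move=> xpy; apply: ge_inf; last by exists p.
by exists 0 => _ [q [rq _ _] <-]; apply: plen_ge0 rq.
Qed.

Lemma dist_self_le0 x : d x x <= 0.
Proof. by rewrite -(plen_nil w x); apply: dist_le_plen. Qed.

Lemma dist_attained x y : exists p, spath E x p y /\ plen w x p = d x y.
Proof.
have size_spath p : spath E x p y -> (size p <= #|V|)%N.
  case=> _ _ /card_uniqP card_p; apply: leq_trans (leqnSn _) _.
  by rewrite -[(size p).+1]/(size (x :: p)) -card_p max_card.
pose P (b : #|V|.-bseq V) := `[< spath E x b y >].
have [p0 xp0y] := G_conn x y.
have P_p0 : P (Bseq (size_spath _ xp0y)) by apply/asboolP.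
case: (arg_minP (fun b : #|V|.-bseq V => plen w x b) P_p0) => p /asboolP xpy p_min.
exists p; split=> //; apply/eqP; rewrite eq_le dist_le_plen // andbT.
apply: lb_le_inf; first by exists (plen w x p), p.
move=> _ [q xqy <-]; exact: (p_min (Bseq (size_spath _ xqy)) (asboolT xqy)).
Qed.

Lemma dist_le_walk x p : walk_in E x p -> d x (last x p) <= plen w x p.
Proof.
move=> /(walk_shorten w_pos)[q [Eq <- uq _ [le_q _]]].
exact/(le_trans _ le_q)/dist_le_plen.
Qed.

Lemma dist_lt_walk x p : walk_in E x p -> ~~ uniq (x :: p) ->
  d x (last x p) < plen w x p.
Proof.
move=> /(walk_shorten w_pos)[q [Eq <- uq _ [_ lt_q]]] /lt_q.
exact/le_lt_trans/dist_le_plen.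
Qed.

Lemma dist_sym x y : d x y = d y x.
Proof.
have E_sym a b : E a b -> E b a by rewrite /= e_sym.
suff dist_le_sym a b : d a b <= d b a by apply/eqP; rewrite eq_le !dist_le_sym.
have [p [bpa <-]] := dist_attained b a.
case: (bpa) => Ep lp _; rewrite -(plen_rev w_sym Ep) lp.
by apply: dist_le_plen; apply: spath_rev E_sym bpa.
Qed.

Lemma dist_le_plen_rev x p y : spath E x p y -> d y x <= plen w x p.
Proof. by rewrite dist_sym; apply: dist_le_plen. Qed.

Lemma dist_triangle x y z : d x z <= d x y + d y z.
Proof.
have [p [[Ep lp _] <-]] := dist_attained x y.
have [q [[Eq lq _] <-]] := dist_attained y z.
have Epq : walk_in E x (p ++ q) by apply/walk_in_cat; rewrite lp.
by have := dist_le_walk Epq; rewrite last_cat lp lq plen_cat lp.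
Qed.

Lemma shortest_cat x p q y : spath E x (p ++ q) y -> plen w x (p ++ q) = d x y ->
  plen w x p = d x (last x p) /\ plen w (last x p) q = d (last x p) y.
Proof.
move=> /spath_cat[/dist_le_plen le_p /dist_le_plen le_q]; rewrite plen_cat => eq_pq.
have := dist_triangle x (last x p) y.
by split; apply/eqP; rewrite eq_le; apply/andP; split; lra.
Qed.

Section ShortestPathTree.
Variables (s t : V) (ET : V -> V -> Prop).
Hypotheses (e_irr : irreflexive e) (hT : sp_tree e w s ET).

Local Notation D_edge := (inD e w s t).
Local Notation R_edge := (forestR e w s t ET).
Local Notation R_conn := (same_comp e w s t ET).
Local Notation Et := (Etilde e w s t ET).

(* The vertices of D: those with d(s,a) + d(a,t) = d(s,t). *)
Definition D_vertex a := d s a + d a t <= d s t.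

Lemma ET_e a b : ET a b -> e a b.
Proof. by case: hT => + _ _ _ _; apply. Qed.

Lemma ET_sym a b : ET a b -> ET b a.
Proof. by case: hT => _ + _ _ _; apply. Qed.

Lemma ET_pos a b : ET a b -> 0 < w a b.
Proof. by move/ET_e/w_pos. Qed.

Lemma tree_path_shortest c : exists p, spath ET s p c /\ plen w s p = d s c.
Proof. by case: hT => _ _ _ _; apply. Qed.

Lemma spath_ET_E x p y : spath ET x p y -> spath E x p y.
Proof. by case=> Tp lp up; split=> //; apply: sub_walk_in Tp; apply: ET_e. Qed.

(* Otherwise the walk, shortened to a simple one and closed by the edge a b,
   is a cycle of the tree. *)
Lemma tree_walk_avoiding_edge a b p : ET a b ->
  walk_in (fun c c' => ET c c' /\ ~ ((c = a /\ c' = b) \/ (c = b /\ c' = a))) b p ->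
  last b p <> a.
Proof.
move=> Tab Wp lp.
have ab : a != b by apply: contraTneq (ET_e Tab) => ->; rewrite e_irr.
have [q [Wq lq uq _ _]] :=
  walk_shorten (fun c c' (Tcc' : _ /\ _) => ET_pos (proj1 Tcc')) Wp.
case: hT => _ _ _ acyclic _; rewrite lp in lq.
case/lastP: q Wq lq uq => [_ /= ba|q' c]; first by rewrite ba eqxx in ab.
rewrite last_rcons -cats1 => /walk_in_cat[Wq' /= [[Tq'a not_ab] _]] ca uq; subst c.
case: q' Wq' Tq'a not_ab uq => [|c q'] Wq' Tq'a not_ab uq.
  by apply: not_ab; right.
apply: acyclic; exists a, [:: b, c & q']; split=> //.
- by move: uq; rewrite cats1 -cons_uniq -rcons_cons rcons_uniq.
- by split=> //; apply: sub_walk_in Wq' => ? ? [].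
Qed.

Lemma D_edge_sym a b : D_edge a b -> D_edge b a.
Proof. by case=> p [sp lp ab]; exists p; split=> //; case: ab; [right|left]. Qed.

Lemma R_edge_pos a b : R_edge a b -> 0 < w a b.
Proof. by case=> /ET_pos. Qed.

Lemma R_edge_sym a b : R_edge a b -> R_edge b a.
Proof. by case=> /ET_sym Tba nDab; split=> // /D_edge_sym. Qed.

Lemma R_edge_conn a b : R_edge a b -> R_conn a b.
Proof. by exists [:: b]. Qed.

Lemma R_conn_refl a : R_conn a a.
Proof. by exists [::]. Qed.

Lemma R_conn_trans a b c : R_conn a b -> R_conn b c -> R_conn a c.
Proof.
move=> [p [Rp lp]] [q [Rq lq]]; exists (p ++ q).
by rewrite walk_in_cat last_cat lp.
Qed.

Lemma R_conn_sym a b : R_conn a b -> R_conn b a.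
Proof.
move=> [p [Rp <-]]; exists (rev (belast a p)).
by rewrite last_rev_belast; split=> //; apply: walk_in_rev R_edge_sym Rp.
Qed.

Lemma D_vertex_s : D_vertex s.
Proof. by rewrite /D_vertex; have := dist_self_le0 s; lra. Qed.

Lemma D_vertex_t : D_vertex t.
Proof. by rewrite /D_vertex; have := dist_self_le0 t; lra. Qed.

Lemma D_vertex_shortest p c : spath E s p t -> plen w s p = d s t ->
  c \in s :: p -> D_vertex c.
Proof.
move=> sp lp cp; case/splitPl: cp sp lp => p1 p2 <- sp lp.
by rewrite /D_vertex; have [<- <-] := shortest_cat sp lp; rewrite -plen_cat lp.
Qed.

Lemma D_edge_vertices a b : D_edge a b -> D_vertex a /\ D_vertex b.
Proof.
case=> p [sp lp ab].
have inp c : c \in p -> c \in s :: p by rewrite in_cons orbC => ->.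
by case: ab => /mem_zip_edge[? /inp ?]; split; apply: D_vertex_shortest sp lp _.
Qed.

(* Extending a shortest path to a vertex of D by a shortest path to t yields
   a shortest st-path; it is simple since a walk with a loop is strictly
   longer than d(s,t). *)
Lemma shortest_to_D_vertex_in_D p c : D_vertex c -> spath E s p c ->
  plen w s p = d s c -> walk_in D_edge s p.
Proof.
move=> Dc [Ep lp up] len_p; have [q [[Eq lq uq] len_q]] := dist_attained c t.
have Epq : walk_in E s (p ++ q) by apply/walk_in_cat; rewrite lp.
have l_pq : last s (p ++ q) = t by rewrite last_cat lp.
have len_pq : plen w s (p ++ q) = d s c + d c t by rewrite plen_cat lp len_p len_q.
have u_pq : uniq (s :: p ++ q).
  apply: contraT => /(dist_lt_walk Epq); rewrite l_pq len_pq.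
  by move: Dc; rewrite /D_vertex; lra.
have sp_pq : spath E s (p ++ q) t by [].
apply/walk_in_zip => a b ab; exists (p ++ q).
split=> //; last by left; apply: mem_zip_catl.
by have := dist_le_plen sp_pq; move: Dc; rewrite /D_vertex len_pq => *; lra.
Qed.

Lemma D_tree_path c : D_vertex c ->
  exists2 p, last s p = c & walk_in (fun x y => ET x y /\ D_edge x y) s p.
Proof.
move=> Dc; have [p [Tp len_p]] := tree_path_shortest c.
have Dp := shortest_to_D_vertex_in_D Dc (spath_ET_E Tp) len_p.
by case: Tp => Tp lp _; exists p => //; apply: walk_in_and.
Qed.

(* If a a1 ... b is a simple R-walk, then a1 ... b followed by the tree paths
   from b back to s and from s to a, which lie in D, is a walk of T from a1 to
   a that avoids the edge a a1. *)
Lemma D_vertex_R_conn_eq a b : D_vertex a -> D_vertex b -> R_conn a b -> a = b.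
Proof.
move=> Da Db [p [Rp lp]]; case: (eqVneq a b) => // ab; exfalso.
have [q [Rq lq uq _ _]] := walk_shorten R_edge_pos Rp; rewrite lp in lq.
case: q Rq lq uq => [_ /= ba|a1 q [[Taa1 nDaa1] /walk_in_zip Rq] /= lq];
  first by rewrite ba eqxx in ab.
move=> /andP[aNq _].
have [pa la TDpa] := D_tree_path Da; have [pb lb TDpb] := D_tree_path Db.
pose avoid x y := ET x y /\ ~ ((x = a /\ y = a1) \/ (x = a1 /\ y = a)).
have TD_avoid x y : ET x y /\ D_edge x y -> avoid x y.
  move=> [Txy Dxy]; split=> // -[] [ex ey]; subst x y; first exact: nDaa1.
  exact/nDaa1/D_edge_sym.
have TD_sym x y : ET x y /\ D_edge x y -> ET y x /\ D_edge y x.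
  by move=> [/ET_sym ? /D_edge_sym ?].
apply: (tree_walk_avoiding_edge Taa1 (p := q ++ rev (belast s pb) ++ pa)).
  apply/walk_in_cat; split.
    apply/walk_in_zip => x y xy; have [xq yq] := mem_zip_edge xy.
    have [Txy _] := Rq _ _ xy; split=> // -[] [ex ey]; subst x y.
      by rewrite xq in aNq.
    by rewrite in_cons yq orbT in aNq.
  rewrite lq -lb; apply/walk_in_cat; rewrite last_rev_belast.
  by split; apply: sub_walk_in TD_avoid _; [apply: walk_in_rev TD_sym _|].
by rewrite !last_cat lq -lb last_rev_belast.
Qed.

Lemma R_conn_of_not_Etilde a b : e a b -> ~ D_edge a b -> ~ Et a b -> R_conn a b.
Proof.
move=> eab nDab nEtab; case: (pselect (ET a b)) => [Tab|nTab].
  exact: R_edge_conn.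
by apply: contrapT => nRab; apply: nEtab.
Qed.

(* [g] is the last vertex of D seen, in the component of R of the current
   vertex; as such a component contains at most one vertex of D, a step inside
   a component could only lead back to D at [g] itself, which simplicity
   forbids. *)
Lemma D_walk_of_simple_walk x p :
  walk_in (fun a b => D_edge a b \/ R_conn a b) x p -> uniq (x :: p) ->
  D_vertex x -> D_vertex (last x p) -> walk_in D_edge x p.
Proof.
move=> Wp up Dx Dl; have /andP[xNp _] := up.
suff /(_ x Dx (R_conn_refl x) xNp) [] : forall g, D_vertex g -> R_conn g x ->
  g \notin p -> g = x /\ walk_in D_edge x p by [].
elim: p x Wp up Dl {Dx xNp} => [|y p IHp] x /=.
  by move=> _ _ Dx g Dg Rgx _; split=> //; apply: D_vertex_R_conn_eq.
move=> [DRxy Wp] /andP[_ up] Dl g Dg Rgx.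
rewrite in_cons negb_or => /andP[gy gNp]; case: DRxy => [Dxy|Rxy].
  have [Dx Dy] := D_edge_vertices Dxy; have /andP[yNp _] := up.
  split; first exact: D_vertex_R_conn_eq Rgx.
  by split=> //; case: (IHp y Wp up Dl y Dy (R_conn_refl y) yNp).
have [gy' _] := IHp y Wp up Dl g Dg (R_conn_trans Rgx Rxy) gNp.
by rewrite gy' eqxx in gy.
Qed.

Lemma outward_Etilde_edge q : outward e w s t q ->
  exists a b, (a, b) \in zip (s :: q) q /\ Et a b.
Proof.
move=> [[Eq lq uq] [a [b [abq nDab]]]]; apply: contrapT => noEt.
have DRq : walk_in (fun a b => D_edge a b \/ R_conn a b) s q.
  apply/walk_in_zip => x y xy.
  case: (pselect (D_edge x y)) => [|nDxy]; first by left.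
  right; apply: R_conn_of_not_Etilde nDxy _; first by move/walk_in_zip: Eq; apply.
  by move=> Etxy; apply: noEt; exists x, y.
have Dl : D_vertex (last s q) by rewrite lq; apply: D_vertex_t.
have /walk_in_zip Dq := D_walk_of_simple_walk DRq uq D_vertex_s Dl.
by case: abq => /Dq //= /D_edge_sym.
Qed.

Definition fvalR a b := d s a + w a b + d b t.

Lemma fvalE a b : Et a b -> fval e w s t ET a b = (fvalR a b)%:E.
Proof. by move=> Etab; rewrite /fval; case: pselect. Qed.

Lemma Etilde_sym a b : Et a b -> Et b a.
Proof.
case=> eab nTab nDab nRab; split; rewrite 1?e_sym //.
- by move/ET_sym.
- by move/D_edge_sym.
- by move/R_conn_sym.
Qed.

Lemma fvalR_le_outward q : outward e w s t q ->
  exists a b, Et a b /\ fvalR a b <= plen w s q.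
Proof.
move=> /[dup] [[sq _]] /outward_Etilde_edge[a [b [abq Etab]]].
exists a, b; split=> //.
have [q1 [q2 [eq la]]] := mem_zip_split abq; move: sq; rewrite eq.
move=> /spath_cat[/dist_le_plen]; rewrite la.
move=> le1 /spath_cons[_ /dist_le_plen le2].
by rewrite plen_cat la plen_cons /fvalR; lra.
Qed.

Lemma walk_to_D_vertex x p : walk_in (fun a b => e a b /\ ~ Et a b) x p ->
  D_vertex (last x p) -> exists p1 p2,
  [/\ p = p1 ++ p2, D_vertex (last x p1) & forall c, c \in x :: p1 -> R_conn x c].
Proof.
elim: p x => [|y p IHp] x Wp Dl.
  exists [::], [::]; split=> // c.
  by rewrite mem_seq1 => /eqP->; apply: R_conn_refl.
have [Dx|nDx] := boolP (D_vertex x).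
  exists [::], (y :: p); split=> // c.
  by rewrite mem_seq1 => /eqP->; apply: R_conn_refl.
case: Wp => [[exy nEtxy] Wp].
have Rxy : R_conn x y.
  apply: R_conn_of_not_Etilde exy _ nEtxy => /D_edge_vertices[Dx _].
  by rewrite Dx in nDx.
have [p1 [p2 [-> Dl1 Rp1]]] := IHp y Wp Dl.
exists (y :: p1), p2; split=> // c; rewrite in_cons => /orP[/eqP->|/Rp1].
  exact: R_conn_refl.
exact: R_conn_trans.
Qed.

(* Behind an edge outside D, a shortest tree path only uses edges outside D:
   if a later edge were in D, the prefix ending there would be a shortest path
   to a vertex of D, all of whose edges are in D. *)
Lemma tree_path_R_conn p1 y p2 c : spath ET s (p1 ++ y :: p2) c ->
  plen w s (p1 ++ y :: p2) = d s c -> ~ D_edge (last s p1) y ->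
  R_conn (last s p1) c.
Proof.
move=> Tp len_p nDy; have [_ [/walk_in_zip Tp2 lp2 _]] := spath_cat Tp.
exists (y :: p2); split=> //; apply/walk_in_zip => a b ab.
split=> [|Dab]; first exact: Tp2.
have [_ Db] := D_edge_vertices Dab; have [q1 [q2 [eq _]]] := mem_zip_split ab.
have [r def_r] : exists r, rcons q1 b = y :: r.
  by case: q1 eq => [|h q1] [-> _]; [exists [::]|exists (rcons q1 b)].
have split_p : p1 ++ y :: p2 = (p1 ++ y :: r) ++ q2.
  by rewrite eq -def_r -catA cat_rcons.
rewrite split_p in Tp len_p; have Ep := spath_ET_E Tp.
have [sp _] := spath_cat Ep; have [len_pr _] := shortest_cat Ep len_p.
have lb : last s (p1 ++ y :: r) = b by rewrite -def_r last_cat last_rcons.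
rewrite lb in sp len_pr.
have /walk_in_zip Dpr := shortest_to_D_vertex_in_D Db sp len_pr.
exact/nDy/Dpr/mem_zip_mid.
Qed.

Section ShortestOutwardPath.
Variables (u v : V) (pu pv : seq V).
Hypotheses (Et_uv : Et u v)
  (uv_min : forall a b, Et a b -> fvalR u v <= fvalR a b)
  (uv_tie : forall a b, Et a b -> fvalR a b = fvalR u v -> d v t <= d b t)
  (Tpu : spath ET s pu u) (len_pu : plen w s pu = d s u)
  (Epv : spath E v pv t) (len_pv : plen w v pv = d v t).

Lemma walk_via_uv p : walk_in E v p -> walk_in E s (pu ++ v :: p).
Proof.
case: (spath_ET_E Tpu) => Epu lpu _ Ep; apply/walk_in_cat; rewrite lpu.
by split=> //; split=> //; case: Et_uv.
Qed.

Lemma plen_via_uv p : plen w s (pu ++ v :: p) = d s u + w u v + plen w v p.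
Proof. by case: Tpu => _ lpu _; rewrite plen_cat plen_cons lpu len_pu addrA. Qed.

(* By the choice of (u, v), an edge of Etilde on pv would give an equally
   short candidate with a strictly smaller d(., t). *)
Lemma shortest_from_v_no_Etilde a b : (a, b) \in zip (v :: pv) pv -> ~ Et a b.
Proof.
move=> ab Etab; have [p1 [p2 [def_pv la]]] := mem_zip_split ab.
move: Epv len_pv; rewrite def_pv => Ep len_p.
have [[Ep1 _ _] Ebp2] := spath_cat Ep; rewrite la in Ebp2.
have [_ /dist_le_plen le_bt] := spath_cons Ebp2.
have := dist_le_walk (walk_via_uv Ep1); rewrite last_cat /= la plen_via_uv => le_sa.
move: len_p; rewrite plen_cat la plen_cons => len_p.
have [eab _ _ _] := Etab; have := w_pos eab; have := plen_ge0 w_pos Ep1.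
have eq_f : fvalR a b = fvalR u v.
  by apply/eqP; rewrite eq_le uv_min // andbT /fvalR; lra.
by have := uv_tie Etab eq_f; rewrite /fvalR; lra.
Qed.

(* Either the tree path to u leaves D right after z, and then it stays in the
   component of z, hence of v, up to u; or its next edge z z' is in D, and then
   f(v,u) <= f(u,v) - 2 w(z,z'). *)
Lemma meet_in_R_component z : z \in s :: pu -> z \in v :: pv -> R_conn v z -> False.
Proof.
move=> zpu zpv Rvz; have [_ _ _ nRuv] := Et_uv.
case/splitPl: zpu Tpu len_pu => pu1 pu2 lz Tp len_p.
case: pu2 => [|z' pu3] in Tp len_p *.
  by case: Tp => _; rewrite cats0 lz => zu _; apply/nRuv/R_conn_sym; rewrite -zu.
have [Dzz'|nDzz'] := pselect (D_edge z z'); last first.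
  apply/nRuv/R_conn_sym/(R_conn_trans Rvz); rewrite -lz.
  by apply: tree_path_R_conn Tp len_p _; rewrite lz.
have [_ Dz'] := D_edge_vertices Dzz'.
have [/dist_le_plen le_sz]:= spath_cat (spath_ET_E Tp); rewrite lz in le_sz *.
move=> /spath_cons[ezz' /[dup] /dist_le_plen le_z'u /dist_le_plen_rev le_uz'].
move: len_p; rewrite plen_cat lz plen_cons => len_p.
case/splitPl: zpv Epv len_pv => pa pc la Ep len_q.
have [/dist_le_plen_rev le_zv] := spath_cat Ep; rewrite la in le_zv *.
move=> /dist_le_plen le_zt.
move: len_q; rewrite plen_cat la => len_q.
have := dist_triangle s z' u; have := dist_triangle u z' t.
have := dist_triangle s z t; have := dist_triangle s z v.
have := uv_min (Etilde_sym Et_uv); have := w_pos ezz'.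
have [euv _ _ _] := Et_uv; rewrite /fvalR (w_sym euv); move: Dz'; rewrite /D_vertex.
lra.
Qed.

(* With q = last v p1, f(v,u) <= f(u,v) - 2 len(pv from q to z). *)
Lemma meet_beyond_D_vertex p1 p2 z : pv = p1 ++ p2 -> D_vertex (last v p1) ->
  z \in s :: pu -> z \in p2 -> False.
Proof.
move=> def_pv Dq zpu zp2; case/path.splitP: zp2 def_pv => pb pc def_pv.
case/splitPl: zpu Tpu len_pu => pu1 pu2 lz Tp len_p.
have [/dist_le_plen le_sz] := spath_cat (spath_ET_E Tp); rewrite lz in le_sz *.
move=> /dist_le_plen_rev le_uz; move: len_p; rewrite plen_cat lz => len_p.
move: Epv len_pv; rewrite def_pv => Ep len_q.
have [len1 len2] := shortest_cat Ep len_q.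
have [/dist_le_plen_rev le_qv Eq] := spath_cat Ep.
have [Eqz] := spath_cat Eq; rewrite last_rcons => /dist_le_plen le_zt.
have [Ez _ _] := Eqz; have : 0 < plen w (last v p1) (rcons pb z).
  by apply: (plen_gt0 w_pos Ez); case: (pb).
move: len_q (len2) Dq; rewrite /D_vertex !plen_cat last_rcons => len_q len2' Dq.
have := dist_triangle s z t; have := dist_triangle u z t.
have := dist_triangle s (last v p1) v; have := uv_min (Etilde_sym Et_uv).
have [euv _ _ _] := Et_uv; rewrite /fvalR (w_sym euv) (dist_sym (last v p1) v).
lra.
Qed.

Lemma spath_via_uv : spath E s (pu ++ v :: pv) t.
Proof.
have [Ev lv uv] := Epv; have [_ lu uu] := spath_ET_E Tpu.
split; [exact: walk_via_uv|by rewrite last_cat lu|].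
rewrite -cat_cons cat_uniq uu uv andbT andTb.
apply/hasPn => z zpv; apply/negP => zpu.
have Wv : walk_in (fun a b => e a b /\ ~ Et a b) v pv.
  apply/walk_in_zip => a b ab; split; first by move/walk_in_zip: Ev; apply.
  exact: shortest_from_v_no_Etilde.
have [|p1 [p2 [def_pv Dq Rvp1]]] := walk_to_D_vertex Wv.
  by rewrite lv; apply: D_vertex_t.
move: (zpv); rewrite def_pv -cat_cons mem_cat => /orP[/Rvp1|].
  exact: meet_in_R_component.
exact: meet_beyond_D_vertex def_pv Dq zpu.
Qed.

End ShortestOutwardPath.

Lemma spath_fvalR_min x y :
  Et x y -> (forall a b, Et a b -> fvalR x y <= fvalR a b) ->
  exists p, [/\ spath E s p t, plen w s p = fvalR x y &
                exists a b, on_path s p a b /\ Et a b].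
Proof.
move=> Etxy xy_min.
pose P (ab : V * V) := `[< Et ab.1 ab.2 /\ fvalR ab.1 ab.2 = fvalR x y >].
have Pxy : P (x, y) by apply/asboolP.
case: (arg_minP (fun ab : V * V => d ab.2 t) Pxy).
move=> -[u v] /asboolP[/= Etuv fuv] uv_tie.
have [pu [Tpu len_pu]] := tree_path_shortest u.
have [pv [Epv len_pv]] := dist_attained v t.
exists (pu ++ v :: pv); split.
- apply: (spath_via_uv (u := u)) => // [a b|a b Etab fab].
    by rewrite fuv; apply: xy_min.
  by apply: (uv_tie (a, b)); apply/asboolP; rewrite -fuv.
- by rewrite (plen_via_uv v Tpu len_pu) len_pv.
- by exists u, v; split=> //; left; case: Tpu => _ <- _; apply: mem_zip_mid.
Qed.

End ShortestPathTree.

End Distances.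

Theorem lemma13 (V : finType) (R : realType) (e : rel V) (w : V -> V -> R)
  (s t : V) (ET : V -> V -> Prop)
  (e_irr : irreflexive e) (e_sym : symmetric e)
  (w_sym : forall x y, e x y -> w x y = w y x)
  (w_pos : forall x y, e x y -> 0 < w x y)
  (G_conn : forall u v, exists p, spath (fun a b => e a b) u p v)
  (hT : sp_tree e w s ET)
  (x y : V)
  (hmin : forall u v, (fval e w s t ET x y <= fval e w s t ET u v)%E)
  (hfin : fval e w s t ET x y <> +oo%E) :
  (exists p, [/\ spath (fun a b => e a b) s p t,
                 (plen w s p)%:E = fval e w s t ET x y
               & exists u v, on_path s p u v /\ Etilde e w s t ET u v]) /\
  (forall p, [/\ spath (fun a b => e a b) s p t,
                 (plen w s p)%:E = fval e w s t ET x y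
               & exists u v, on_path s p u v /\ Etilde e w s t ET u v] ->
     optimal_outward e w s t p).
Proof.
have Etxy : Etilde e w s t ET x y by move: hfin; rewrite /fval; case: pselect.
have xy_min a b : Etilde e w s t ET a b -> fvalR e w s t x y <= fvalR e w s t a b.
  by move=> Etab; have := hmin a b; rewrite !fvalE // lee_fin.
split.
  have [p [sp len_p Etp]] :=
    spath_fvalR_min e_sym w_sym w_pos G_conn hT Etxy xy_min.
  by exists p; rewrite fvalE // len_p.
move=> p [sp len_p [u [v [uvp Etuv]]]]; split.
  by split=> //; exists u, v; split=> //; case: Etuv.
move=> q /(fvalR_le_outward w_pos G_conn e_irr hT)[a [b [Etab le_q]]].
move: len_p; rewrite fvalE // => -[->]; exact: le_trans (xy_min _ _ Etab) le_q.
Qed.
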